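(* Let $\omega>0$ be fixed and, for a time step $\tau>0$, set $\sigma=\sigma(\tau)=\omega\sqrt{\tau}$. Let $w:\mathbb{R}\to\mathbb{R}$ (the weighting function, depending on fixed parameters $\bm\theta$) be continuous and bounded away from zero, i.e. there exist constants $L,U$ with $0<L\le w(x)\le U$ for all $x\in\mathbb{R}$, and let $w$ be twice differentiable with bounded second derivative. For $x,y\in\mathbb{R}$ and $s>0$ define $$p_1(x\mid y,s,\bm\theta)=\frac{k_s(x;y)\,w(x)}{\int_{\mathbb{R}}k_s(z;y)\,w(z)\,\mathrm{d}z},\qquad p_2(x\mid y,s,\bm\theta)=\int_{\mathbb{R}}p_1(x\mid z,s,\bm\theta)\,p_1(z\mid y,s,\bm\theta)\,\mathrm{d}z,$$ where $k_s(\cdot;y)$ is the Gaussian density with mean $y$ and standard deviation $s$. Then the model is asymptotically robust of degree 2 with parameter transformation $g_2(\sigma,\bm\theta)=(\sqrt2\,\sigma,\bm\theta)$: writing $$p_2(x\mid y,\sigma(\tau),\bm\theta)=p_1(x\mid y,\sqrt2\,\sigma(\tau),\bm\theta)\,v(x,y;\tau),$$ there is a constant $C>0$ such that $|v(x,y;\tau)-1|\le C\tau$ for all $x,y\in\mathbb{R}$ and all $\tau>0$.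
   Context: The setting is a one-dimensional discrete-time Markov movement model with time step $\tau$, whose one-step transition density is a Gaussian movement kernel (standard deviation $\sigma(\tau)=\omega\sqrt\tau$) multiplied by a positive weighting function and renormalized. Asymptotic robustness of degree $n$ means: there is an injective parameter map $g_n$ and a function $v(x,y;\tau)>0$ with $v-1=\mathcal{O}(\tau)$ uniformly on $\mathbb{R}^2\times(0,\infty)$ such that $p_n(x\mid y,\bm\theta)=p_1(x\mid y,g_n(\bm\theta))\,v(x,y;\tau)$. *)

From Stdlib Require Import Reals.
From Coquelicot Require Import Coquelicot.
Open Scope R_scope.

Definition gauss (s y x : R) : R :=
  / (s * sqrt (2 * PI)) * exp (- (x - y) ^ 2 / (2 * s ^ 2)).

Definition int_R (f : R -> R) : R :=
  RInt_gen f (Rbar_locally m_infty) (Rbar_locally p_infty).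

Definition p1 (w : R -> R) (s x y : R) : R :=
  gauss s y x * w x / int_R (fun z => gauss s y z * w z).

Definition p2 (w : R -> R) (s x y : R) : R :=
  int_R (fun z => p1 w s x z * p1 w s z y).

(* The Chapman-Kolmogorov integrand factors by completing the square:
     k_s(x; z) k_s(z; y) = k_{sqrt 2 s}(x; y) k_{s / sqrt 2}(z; (x + y) / 2).
   Writing Z_s(y) = int k_s(z; y) w(z) dz for the normaliser of p_1, this gives
     p_2(x | y, s) = p_1(x | y, sqrt 2 s) * Z_{sqrt 2 s}(y) / Z_s(y)
                     * int k_{s / sqrt 2}(z; (x + y) / 2) w(z) / Z_s(z) dz.
   Substituting z = y + s u and expanding w to second order (the linear term is odd in u and
   integrates to zero) gives Z_s(y) = K w(y) + O(s^2) uniformly in y, with K the mass of a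
   Gaussian; also K L <= Z_s(y).
   Hence the ratio of normalisers and the smoothed weight w / Z_s, which is 1/K + O(s^2), are
   both 1 + O(s^2), and s^2 = omega^2 tau. *)

From Stdlib Require Import Reals Lra.
From Coquelicot Require Import Coquelicot.
Open Scope R_scope.

Notation is_int_R f l :=
  (is_RInt_gen f (Rbar_locally m_infty) (Rbar_locally p_infty) l).

Lemma continuous_Rmult (f g : R -> R) x :
  continuous f x -> continuous g x -> continuous (fun y => f y * g y) x.
Proof. intros; apply (continuous_mult (K := R_AbsRing)); auto. Qed.

Lemma continuous_comp_affine (f : R -> R) s m x :
  (forall y, continuous f y) -> continuous (fun u => f (s * u + m)) x.
Proof.
  intros Cf. apply (continuous_comp (fun u => s * u + m) f); [|apply Cf].
  apply (ex_derive_continuous (fun u => s * u + m)). auto_derive; auto.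
Qed.

Lemma ex_RInt_continuous_R (f : R -> R) a b :
  (forall x, continuous f x) -> ex_RInt f a b.
Proof. intros Cf. apply (ex_RInt_continuous (V := R_CompleteNormedModule)); auto. Qed.

Lemma RInt_Chasles_R (f : R -> R) a b c : (forall x, continuous f x) ->
  RInt f a b = RInt f a c + RInt f c b.
Proof.
  intros Cf. symmetry.
  apply (RInt_Chasles (V := R_CompleteNormedModule)); apply ex_RInt_continuous_R; auto.
Qed.

Lemma is_int_R_tail (f : R -> R) l : (forall x, continuous f x) ->
  is_int_R f l <-> forall eps, 0 < eps ->
    exists N, forall a b, a < -N -> N < b -> Rabs (RInt f a b - l) < eps.
Proof.
  intros Cf. split.
  - intros H eps Heps.
    destruct (H _ (locally_ball l (mkposreal eps Heps))) as [P Q [N1 HP] [N2 HQ] HPQ].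
    exists (Rabs N1 + Rabs N2). intros a b Ha Hb.
    destruct (HPQ a b) as [y [Hy Hball]].
    + apply HP. pose proof (Rle_abs (- N1)). rewrite Rabs_Ropp in *.
      pose proof (Rabs_pos N2). lra.
    + apply HQ. pose proof (Rle_abs N2). pose proof (Rabs_pos N1). lra.
    + simpl in Hy. rewrite (is_RInt_unique _ _ _ _ Hy). exact Hball.
  - intros Ht.
    apply filterlimi_lim_ext with (f := fun ab => RInt f (fst ab) (snd ab)).
    { intros [a b]. apply (RInt_correct (V := R_CompleteNormedModule)),
        ex_RInt_continuous_R; auto. }
    apply filterlim_locally. intros [eps Heps].
    destruct (Ht eps Heps) as [N HN].
    apply Filter_prod with (fun a => a < -N) (fun b => N < b).
    + exists (-N); auto.
    + exists N; auto.
    + intros a b Ha Hb. exact (HN a b Ha Hb).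
Qed.

Lemma is_int_R_unique (f : R -> R) l : is_int_R f l -> int_R f = l.
Proof. apply (is_RInt_gen_unique (V := R_CompleteNormedModule)). Qed.

Lemma is_int_R_ext (f g : R -> R) l :
  (forall x, f x = g x) -> is_int_R f l -> is_int_R g l.
Proof.
  intros Efg. apply (is_RInt_gen_ext (V := R_NormedModule)).
  apply Filter_prod with (fun _ => True) (fun _ => True); try (exists 0; auto).
  intros; apply Efg.
Qed.

Lemma is_int_R_abs_le (f g : R -> R) lf lg : (forall x, Rabs (f x) <= g x) ->
  is_int_R f lf -> is_int_R g lg -> Rabs lf <= lg.
Proof.
  intros Hfg. apply (RInt_gen_norm (V := R_CompleteNormedModule)).
  - apply Filter_prod with (fun a => a < 0) (fun b => 0 < b); try (exists 0; auto).
    simpl; intros; lra.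
  - apply Filter_prod with (fun _ => True) (fun _ => True); try (exists 0; auto).
    intros; apply Hfg.
Qed.

Lemma is_int_R_ge0 (f : R -> R) l : (forall x, 0 <= f x) -> is_int_R f l -> 0 <= l.
Proof.
  intros Hf Hl. pose proof (Rabs_pos l).
  enough (Rabs l <= l) by lra.
  apply (is_int_R_abs_le f f); auto. intro x. rewrite Rabs_pos_eq; auto; lra.
Qed.

Lemma is_int_R_le (f g : R -> R) lf lg : (forall x, f x <= g x) ->
  is_int_R f lf -> is_int_R g lg -> lf <= lg.
Proof.
  intros Hfg Hf Hg.
  enough (0 <= lg - lf) by lra.
  apply (is_int_R_ge0 (fun x => g x - f x)); [intro x; specialize (Hfg x); lra|].
  exact (is_RInt_gen_minus g f lg lf Hg Hf).
Qed.

Lemma is_int_R_comp_affine (f : R -> R) s m l : 0 < s -> (forall x, continuous f x) ->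
  is_int_R f l -> is_int_R (fun u => s * f (s * u + m)) l.
Proof.
  intros Hs Cf Hf.
  assert (Cfs : forall x, continuous (fun u => s * f (s * u + m)) x).
  { intro. apply continuous_Rmult; [apply continuous_const | apply continuous_comp_affine; auto]. }
  apply is_int_R_tail; auto. intros eps Heps.
  destruct (proj1 (is_int_R_tail f l Cf) Hf eps Heps) as [N HN].
  exists ((Rabs N + Rabs m) / s). intros a b Ha Hb.
  replace (RInt (fun u => s * f (s * u + m)) a b) with (RInt f (s * a + m) (s * b + m))
    by (symmetry; apply (RInt_comp_lin (V := R_CompleteNormedModule)),
          ex_RInt_continuous_R, Cf).
  pose proof (Rle_abs N). pose proof (Rle_abs m). pose proof (Rle_abs (- m)).
  rewrite Rabs_Ropp in *.
  apply HN.
  - apply (Rmult_lt_compat_l s) in Ha; auto.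
    replace (s * - ((Rabs N + Rabs m) / s)) with (- (Rabs N + Rabs m)) in Ha by (field; lra).
    lra.
  - apply (Rmult_lt_compat_l s) in Hb; auto.
    replace (s * ((Rabs N + Rabs m) / s)) with (Rabs N + Rabs m) in Hb by (field; lra).
    lra.
Qed.

Lemma abs_RInt_le_abs_RInt (f g : R -> R) a b :
  (forall x, continuous f x) -> (forall x, continuous g x) ->
  (forall x, Rabs (f x) <= g x) -> Rabs (RInt f a b) <= Rabs (RInt g a b).
Proof.
  intros Cf Cg Hfg.
  assert (Hle : forall p q, p <= q -> Rabs (RInt f p q) <= Rabs (RInt g p q)).
  { intros p q Hpq. eapply Rle_trans; [|apply Rle_abs].
    apply (norm_RInt_le (V := R_NormedModule) f g p q); auto;
      apply (RInt_correct (V := R_CompleteNormedModule)), ex_RInt_continuous_R; auto. }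
  destruct (Rle_dec a b) as [Hab|Hab]; auto.
  rewrite <- (opp_RInt_swap f), <- (opp_RInt_swap g) by (apply ex_RInt_continuous_R; auto).
  unfold opp; simpl. rewrite !Rabs_Ropp. apply Hle. lra.
Qed.

Lemma is_int_R_tails_small (g : R -> R) lg : (forall x, continuous g x) ->
  is_int_R g lg -> forall eps, 0 < eps -> exists N, 0 < N /\
    (forall p q, p < -N -> q < -N -> Rabs (RInt g p q) < eps) /\
    (forall p q, N < p -> N < q -> Rabs (RInt g p q) < eps).
Proof.
  intros Cg Hg eps Heps.
  destruct (proj1 (is_int_R_tail g lg Cg) Hg (eps / 2)) as [N HN]; [lra|].
  pose proof (Rle_abs N). pose proof (Rle_abs (- N)). rewrite Rabs_Ropp in *.
  exists (Rabs N + 1). split; [lra|split]; intros p q Hp Hq.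
  - (* RInt g p q = RInt g p b - RInt g q b with b far right, both within eps / 2 of lg *)
    rewrite (RInt_Chasles_R g p q (Rabs N + 1)), <- (opp_RInt_swap g q)
      by auto using ex_RInt_continuous_R.
    pose proof (HN p (Rabs N + 1) ltac:(lra) ltac:(lra)) as Hp'.
    pose proof (HN q (Rabs N + 1) ltac:(lra) ltac:(lra)) as Hq'.
    apply Rabs_lt_between in Hp'. apply Rabs_lt_between in Hq'.
    unfold opp; simpl. apply Rabs_lt_between. lra.
  - rewrite (RInt_Chasles_R g p q (- (Rabs N + 1))), <- (opp_RInt_swap g (- (Rabs N + 1)) p)
      by auto using ex_RInt_continuous_R.
    pose proof (HN (- (Rabs N + 1)) p ltac:(lra) ltac:(lra)) as Hp'.
    pose proof (HN (- (Rabs N + 1)) q ltac:(lra) ltac:(lra)) as Hq'.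
    apply Rabs_lt_between in Hp'. apply Rabs_lt_between in Hq'.
    unfold opp; simpl. apply Rabs_lt_between. lra.
Qed.

Lemma ex_int_R_dominated (f g : R -> R) lg :
  (forall x, continuous f x) -> (forall x, continuous g x) ->
  (forall x, Rabs (f x) <= g x) -> is_int_R g lg -> exists l, is_int_R f l.
Proof.
  intros Cf Cg Hfg Hg.
  assert (Hcauchy : exists l, filterlim (fun ab : R * R => RInt f (fst ab) (snd ab))
      (filter_prod (Rbar_locally m_infty) (Rbar_locally p_infty)) (locally l)).
  { apply filterlim_locally_cauchy. intros [eps Heps].
    destruct (is_int_R_tails_small g lg Cg Hg (eps / 2)) as [N [HN [Hleft Hright]]]; [lra|].
    exists (fun ab => fst ab < -N /\ N < snd ab). split.
    - apply Filter_prod with (fun a => a < -N) (fun b => N < b);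
        [exists (-N) | exists N | ]; simpl; auto.
    - intros [u1 u2] [v1 v2] [Hu1 Hu2] [Hv1 Hv2]. simpl in *.
      change (Rabs (RInt f v1 v2 - RInt f u1 u2) < eps).
      rewrite (RInt_Chasles_R f u1 u2 v1), (RInt_Chasles_R f v1 u2 v2) by auto.
      pose proof (abs_RInt_le_abs_RInt f g u1 v1 Cf Cg Hfg).
      pose proof (abs_RInt_le_abs_RInt f g v2 u2 Cf Cg Hfg).
      pose proof (Hleft u1 v1 Hu1 Hv1). pose proof (Hright v2 u2 Hv2 Hu2).
      pose proof (Rabs_triang (RInt f u1 v1) (RInt f v2 u2)).
      replace (RInt f v1 v2 - (RInt f u1 v1 + (RInt f v1 v2 + RInt f v2 u2)))
        with (- (RInt f u1 v1 + RInt f v2 u2)) by ring.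
      rewrite Rabs_Ropp. lra. }
  destruct Hcauchy as [l Hl]. exists l.
  apply filterlimi_lim_ext with (f := fun ab => RInt f (fst ab) (snd ab)); auto.
  intros [a b]. apply (RInt_correct (V := R_CompleteNormedModule)), ex_RInt_continuous_R; auto.
Qed.

Lemma atan_near_PI2 d : 0 < d -> exists N, 0 < N /\ PI / 2 - atan N < d.
Proof.
  intros Hd. pose proof PI_RGT_0.
  set (d' := Rmin (d / 2) (PI / 4)).
  assert (0 < d') by (unfold d'; apply Rmin_glb_lt; lra).
  assert (d' <= PI / 4) by apply Rmin_r.
  assert (d' <= d / 2) by apply Rmin_l.
  assert (Htan : 0 < tan d') by (apply tan_gt_0; lra).
  exists (/ tan d'). split; [apply Rinv_0_lt_compat; auto|].
  rewrite atan_inv, atan_tan by lra. lra.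
Qed.

Lemma is_int_R_Cauchy_density : is_int_R (fun u => / (1 + u ^ 2)) PI.
Proof.
  assert (Hpos : forall u, 0 < 1 + u ^ 2) by (intro u; nra).
  assert (Hder : forall u, is_derive atan u (/ (1 + u ^ 2))).
  { intro u. apply is_derive_Reals, derivable_pt_lim_atan. }
  assert (Cd : forall u, continuous (fun u => / (1 + u ^ 2)) u).
  { intro u. apply (ex_derive_continuous (fun u => / (1 + u ^ 2))).
    auto_derive. specialize (Hpos u). lra. }
  apply is_int_R_tail; auto. intros eps Heps.
  destruct (atan_near_PI2 (eps / 2)) as [N [HN HNd]]; [lra|].
  exists N. intros a b Ha Hb.
  rewrite (is_RInt_unique _ a b (atan b - atan a))
    by (apply (is_RInt_derive atan); intros; auto).
  pose proof (atan_increasing _ _ Hb). pose proof (atan_increasing _ _ Ha).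
  rewrite atan_opp in *. pose proof (atan_bound a). pose proof (atan_bound b).
  apply Rabs_lt_between. lra.
Qed.

Lemma ex_int_R_decay (f : R -> R) c : (forall x, continuous f x) ->
  (forall u, Rabs (f u) <= c / (1 + u ^ 2)) -> exists l, is_int_R f l.
Proof.
  intros Cf Hf.
  apply (ex_int_R_dominated f (fun u => c * / (1 + u ^ 2)) (c * PI)); auto.
  - intro x. apply continuous_Rmult; [apply continuous_const|].
    apply (ex_derive_continuous (fun u => / (1 + u ^ 2))). auto_derive. nra.
  - exact (is_RInt_gen_scal _ c _ is_int_R_Cauchy_density).
Qed.

Definition phi (u : R) : R := exp (- u ^ 2 / 2).

Definition phi_int (h : R -> R) : R := int_R (fun u => phi u * h u).

Definition I0 : R := phi_int (fun _ => 1).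
Definition I2 : R := phi_int (fun u => u ^ 2).

Lemma phi_pos u : 0 < phi u.
Proof. apply exp_pos. Qed.

Lemma continuous_phi u : continuous phi u.
Proof. apply (ex_derive_continuous phi). unfold phi. auto_derive. auto. Qed.

Lemma exp_ge_1_plus x : 0 <= x -> 1 + x <= exp x.
Proof.
  intros Hx. destruct (Req_dec x 0) as [->|]; [rewrite exp_0; lra|].
  left; apply exp_ineq1; lra.
Qed.

Lemma phi_inv u : phi u = / exp (u ^ 2 / 2).
Proof. unfold phi. rewrite <- exp_Ropp. f_equal. field. Qed.

Lemma phi_le u : phi u <= 2 / (1 + u ^ 2).
Proof.
  rewrite phi_inv. assert (0 <= u ^ 2) by nra.
  pose proof (exp_ge_1_plus (u ^ 2 / 2) ltac:(lra)).
  apply (Rle_trans _ (/ (1 + u ^ 2 / 2))); [apply Rinv_le_contravar; lra|].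
  apply (Rmult_le_reg_r ((1 + u ^ 2 / 2) * (1 + u ^ 2))); [nra|].
  field_simplify; nra.
Qed.

Lemma sq_mul_phi_le u : u ^ 2 * phi u <= 16 / (1 + u ^ 2).
Proof.
  rewrite phi_inv. assert (0 <= u ^ 2) by nra.
  assert (E : exp (u ^ 2 / 2) = exp (u ^ 2 / 4) * exp (u ^ 2 / 4))
    by (rewrite <- exp_plus; f_equal; field).
  pose proof (exp_ge_1_plus (u ^ 2 / 4) ltac:(lra)).
  assert ((1 + u ^ 2 / 4) * (1 + u ^ 2 / 4) <= exp (u ^ 2 / 2)) by (rewrite E; nra).
  apply (Rle_trans _ (u ^ 2 / ((1 + u ^ 2 / 4) * (1 + u ^ 2 / 4)))).
  - apply Rmult_le_compat_l; auto. apply Rinv_le_contravar; nra.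
  - apply (Rmult_le_reg_r ((1 + u ^ 2 / 4) * (1 + u ^ 2 / 4) * (1 + u ^ 2))); [nra|].
    field_simplify; nra.
Qed.

Lemma is_int_R_phi_int (h : R -> R) B : (forall x, continuous h x) ->
  (forall u, Rabs (h u) <= B) -> is_int_R (fun u => phi u * h u) (phi_int h).
Proof.
  intros Ch Hh.
  destruct (ex_int_R_decay (fun u => phi u * h u) (2 * B)) as [l Hl].
  - intro. apply continuous_Rmult; auto. apply continuous_phi.
  - intro u. rewrite Rabs_mult, (Rabs_pos_eq (phi u)) by (left; apply phi_pos).
    pose proof (phi_le u). pose proof (phi_pos u). pose proof (Hh u).
    pose proof (Rabs_pos (h u)).
    apply (Rle_trans _ (2 / (1 + u ^ 2) * B)); [apply Rmult_le_compat; lra|].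
    right; field; nra.
  - unfold phi_int. rewrite (is_int_R_unique _ _ Hl). exact Hl.
Qed.

Lemma is_int_R_I0 : is_int_R (fun u => phi u * 1) I0.
Proof.
  apply (is_int_R_phi_int _ 1); [intro; apply continuous_const | intro; rewrite Rabs_R1; lra].
Qed.

Lemma is_int_R_phi_const a : is_int_R (fun u => phi u * a) (a * I0).
Proof.
  apply (is_int_R_ext (fun u => a * (phi u * 1))); [intro; ring|].
  exact (is_RInt_gen_scal _ a _ is_int_R_I0).
Qed.

Lemma is_int_R_phi_sq : is_int_R (fun u => phi u * u ^ 2) I2.
Proof.
  assert (C : forall x, continuous (fun u => phi u * u ^ 2) x).
  { intro x. apply continuous_Rmult; [apply continuous_phi|].
    apply (ex_derive_continuous (fun u => u ^ 2)). auto_derive; auto. }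
  destruct (ex_int_R_decay _ 16 C) as [l Hl].
  - intro u. rewrite Rabs_pos_eq, Rmult_comm by
      (apply Rmult_le_pos; [left; apply phi_pos | nra]). apply sq_mul_phi_le.
  - replace I2 with l by (symmetry; exact (is_int_R_unique _ _ Hl)). exact Hl.
Qed.

Lemma is_int_R_phi_id : is_int_R (fun u => phi u * u) 0.
Proof.
  assert (C : forall x, continuous (fun u => phi u * u) x).
  { intro. apply continuous_Rmult; [apply continuous_phi | apply continuous_id]. }
  apply is_int_R_tail; auto. intros eps Heps.
  (* phi u <= 2 / (1 + u^2) is small once u^2 > 4 / eps *)
  exists (4 / eps + 1). intros a b Ha Hb.
  assert (0 < 4 / eps) by (apply Rdiv_lt_0_compat; lra).
  assert (Hsmall : forall u, 4 / eps + 1 < Rabs u -> phi u < eps / 2).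
  { intros u Hu.
    assert (u ^ 2 = Rabs u * Rabs u) by (rewrite <- pow2_abs; ring).
    apply (Rle_lt_trans _ _ _ (phi_le u)).
    apply (Rmult_lt_reg_r (1 + u ^ 2)); [nra|].
    replace (2 / (1 + u ^ 2) * (1 + u ^ 2)) with 2 by (field; nra).
    assert (eps * (4 / eps) = 4) by (field; lra). nra. }
  rewrite (is_RInt_unique _ a b (- phi b - - phi a)).
  - pose proof (Hsmall a ltac:(rewrite Rabs_left; lra)).
    pose proof (Hsmall b ltac:(rewrite Rabs_right; lra)).
    pose proof (phi_pos a). pose proof (phi_pos b).
    apply Rabs_lt_between. lra.
  - apply (is_RInt_derive (fun u => - phi u)); [|intros; apply C].
    intros x _. unfold phi. auto_derive; auto.
    replace (- (x * (x * 1)) * / 2) with (- x ^ 2 / 2) by field.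
    change RinvImpl.Rinv with Rinv. field.
Qed.

Lemma I0_pos : 0 < I0.
Proof.
  set (f := fun u : R => phi u * 1).
  assert (Cf : forall x, continuous f x).
  { intro. apply continuous_Rmult; [apply continuous_phi | apply continuous_const]. }
  assert (Hf : forall x, 0 <= f x) by (intro; unfold f; pose proof (phi_pos x); lra).
  set (e := exp (-1 / 2)).
  assert (He : 0 < e) by apply exp_pos.
  destruct (proj1 (is_int_R_tail f I0 Cf) is_int_R_I0 e He) as [N HN].
  set (b := Rabs N + 1).
  assert (N < b) by (unfold b; pose proof (Rle_abs N); lra).
  assert (1 <= b) by (unfold b; pose proof (Rabs_pos N); lra).
  specialize (HN (- b) b ltac:(lra) ltac:(lra)).
  assert (Hmid : 2 * e <= RInt f (-1) 1).
  { apply (Rle_trans _ (RInt (fun _ => e) (-1) 1)).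
    - rewrite RInt_const. unfold scal; simpl; unfold mult; simpl. lra.
    - apply RInt_le; [lra | apply ex_RInt_continuous_R; intro; apply continuous_const
                     | apply ex_RInt_continuous_R; auto |].
      intros x Hx. unfold f, phi, e. rewrite Rmult_1_r.
      assert (Hx2 : -1 / 2 <= - x ^ 2 / 2) by nra.
      destruct Hx2 as [Hlt|Heq];
        [left; apply exp_increasing, Hlt | right; rewrite Heq; reflexivity]. }
  assert (0 <= RInt f (- b) (-1)) by
    (apply RInt_ge_0; [lra | apply ex_RInt_continuous_R; auto | intros; apply Hf]).
  assert (0 <= RInt f 1 b) by
    (apply RInt_ge_0; [lra | apply ex_RInt_continuous_R; auto | intros; apply Hf]).
  rewrite (RInt_Chasles_R f (- b) b (-1)), (RInt_Chasles_R f (-1) b 1) in HN by auto.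
  apply Rabs_lt_between in HN. lra.
Qed.

Lemma Rabs_le_of_bounds a b x : a <= x <= b -> Rabs x <= Rabs a + Rabs b.
Proof.
  intros Hx. pose proof (Rle_abs b). pose proof (Rle_abs (- a)).
  rewrite Rabs_Ropp in *. pose proof (Rabs_pos a). pose proof (Rabs_pos b).
  apply Rabs_le. lra.
Qed.

Lemma phi_int_bounds (h : R -> R) a b : (forall x, continuous h x) ->
  (forall x, a <= h x <= b) -> a * I0 <= phi_int h <= b * I0.
Proof.
  intros Ch Hh.
  assert (HJ : is_int_R (fun u => phi u * h u) (phi_int h)).
  { apply (is_int_R_phi_int h (Rabs a + Rabs b)); auto. intro; apply Rabs_le_of_bounds, Hh. }
  split; [apply (is_int_R_le (fun u => phi u * a) (fun u => phi u * h u))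
         |apply (is_int_R_le (fun u => phi u * h u) (fun u => phi u * b))];
    auto using is_int_R_phi_const;
    intro x; apply Rmult_le_compat_l; try apply Hh; left; apply phi_pos.
Qed.

Lemma phi_int_dist (h1 h2 : R -> R) B D :
  (forall x, continuous h1 x) -> (forall x, continuous h2 x) ->
  (forall u, Rabs (h1 u) <= B) -> (forall u, Rabs (h2 u) <= B) ->
  (forall u, Rabs (h1 u - h2 u) <= D) -> Rabs (phi_int h1 - phi_int h2) <= D * I0.
Proof.
  intros C1 C2 B1 B2 Hd.
  apply (is_int_R_abs_le (fun u => phi u * h1 u - phi u * h2 u) (fun u => phi u * D)).
  - intro u. rewrite <- Rmult_minus_distr_l, Rabs_mult, (Rabs_pos_eq (phi u))
      by (left; apply phi_pos).
    apply Rmult_le_compat_l; [left; apply phi_pos | apply Hd].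
  - exact (is_RInt_gen_minus _ _ _ _ (is_int_R_phi_int h1 B C1 B1) (is_int_R_phi_int h2 B C2 B2)).
  - apply is_int_R_phi_const.
Qed.

Lemma phi_int_taylor (h : R -> R) B d M s y :
  (forall x, continuous h x) -> (forall x, Rabs (h x) <= B) ->
  (forall t, Rabs (h (y + t) - h y - d * t) <= M * t ^ 2) ->
  Rabs (phi_int (fun u => h (s * u + y)) - h y * I0) <= M * s ^ 2 * I2.
Proof.
  intros Ch Hh Ht.
  assert (HJ : is_int_R (fun u => phi u * h (s * u + y)) (phi_int (fun u => h (s * u + y)))).
  { apply (is_int_R_phi_int _ B); [intro; apply continuous_comp_affine; auto | intro; apply Hh]. }
  (* the first-order term integrates to 0, leaving only the Taylor remainder *)
  pose proof (is_RInt_gen_minus _ _ _ _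
    (is_RInt_gen_minus _ _ _ _ HJ (is_int_R_phi_const (h y)))
    (is_RInt_gen_scal _ (d * s) _ is_int_R_phi_id)) as Hrem.
  replace (phi_int (fun u => h (s * u + y)) - h y * I0)
    with (phi_int (fun u => h (s * u + y)) - h y * I0 - d * s * 0) by ring.
  refine (is_int_R_abs_le _ (fun u => M * s ^ 2 * (phi u * u ^ 2)) _ _ _ Hrem
            (is_RInt_gen_scal _ _ _ is_int_R_phi_sq)).
  intro u.
  change (Rabs (phi u * h (s * u + y) - phi u * h y - d * s * (phi u * u))
          <= M * s ^ 2 * (phi u * u ^ 2)).
  replace (phi u * h (s * u + y) - phi u * h y - d * s * (phi u * u))
    with (phi u * (h (y + s * u) - h y - d * (s * u)))
    by (rewrite (Rplus_comm y); ring).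
  rewrite Rabs_mult, (Rabs_pos_eq (phi u)) by (left; apply phi_pos).
  replace (M * s ^ 2 * (phi u * u ^ 2)) with (phi u * (M * (s * u) ^ 2)) by ring.
  apply Rmult_le_compat_l; [left; apply phi_pos | apply Ht].
Qed.

Lemma lipschitz_of_derive_bound (f df : R -> R) D :
  (forall x, is_derive f x (df x)) -> (forall x, Rabs (df x) <= D) ->
  forall a b, Rabs (f b - f a) <= D * Rabs (b - a).
Proof.
  intros Hd Hb a b.
  destruct (MVT_gen f a b df) as [c [_ ->]].
  - intros; apply Hd.
  - intros; apply continuity_pt_filterlim, (ex_derive_continuous f). eexists; apply Hd.
  - rewrite Rabs_mult. apply Rmult_le_compat_r; [apply Rabs_pos | apply Hb].
Qed.

Section SecondDerivative.

Variables (f : R -> R) (M : R).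
Hypothesis f_derivable : forall x, ex_derive f x.
Hypothesis Df_derivable : forall x, ex_derive (Derive f) x.
Hypothesis DDf_bounded : forall x, Rabs (Derive (Derive f) x) <= M.

Lemma taylor1_remainder_le a b :
  Rabs (f b - f a - Derive f a * (b - a)) <= M * (b - a) ^ 2.
Proof.
  destruct (MVT_gen f a b (Derive f)) as [c [Hc ->]].
  - intros; apply Derive_correct, f_derivable.
  - intros; apply continuity_pt_filterlim, (ex_derive_continuous f), f_derivable.
  - pose proof (lipschitz_of_derive_bound (Derive f) (Derive (Derive f)) M
      (fun x => Derive_correct _ x (Df_derivable x)) DDf_bounded a c) as Hlip.
    assert (Hca : Rabs (c - a) <= Rabs (b - a)).
    { unfold Rmin, Rmax in Hc. destruct (Rle_dec a b);
        [rewrite (Rabs_pos_eq (c - a)), (Rabs_pos_eq (b - a)) by lra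
        | rewrite (Rabs_left1 (c - a)), (Rabs_left1 (b - a)) by lra]; lra. }
    assert (0 <= M) by (eapply Rle_trans; [apply Rabs_pos | apply (DDf_bounded a)]).
    replace (Derive f c * (b - a) - Derive f a * (b - a))
      with ((Derive f c - Derive f a) * (b - a)) by ring.
    rewrite Rabs_mult, <- (pow2_abs (b - a)).
    apply (Rle_trans _ (M * Rabs (c - a) * Rabs (b - a)));
      [apply Rmult_le_compat_r; auto; apply Rabs_pos|].
    replace (M * Rabs (b - a) ^ 2) with (M * Rabs (b - a) * Rabs (b - a)) by ring.
    apply Rmult_le_compat_r; [apply Rabs_pos|]. apply Rmult_le_compat_l; auto.
Qed.

Lemma Derive_bounded_of_bounded L U :
  (forall x, L <= f x <= U) -> forall x, Rabs (Derive f x) <= U - L + M.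
Proof.
  intros Hf x. pose proof (taylor1_remainder_le x (x + 1)) as Ht.
  replace (x + 1 - x) with 1 in Ht by ring.
  rewrite pow1, Rmult_1_r in Ht.
  replace (Derive f x) with ((f (x + 1) - f x) - (f (x + 1) - f x - Derive f x)) by ring.
  eapply Rle_trans; [apply Rabs_triang|]. rewrite Rabs_Ropp.
  pose proof (Hf x). pose proof (Hf (x + 1)).
  assert (Rabs (f (x + 1) - f x) <= U - L) by (apply Rabs_le; lra).
  lra.
Qed.

End SecondDerivative.

Lemma sqrt_2PI_pos : 0 < sqrt (2 * PI).
Proof. apply sqrt_lt_R0. pose proof PI_RGT_0. lra. Qed.

(* The mass of every [gauss s m]. It equals 1, but positivity is all the proof needs,
   which spares computing the Gaussian integral. *)
Definition gauss_mass : R := / sqrt (2 * PI) * I0.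

Definition gsmooth (s m : R) (h : R -> R) : R := int_R (fun z => gauss s m z * h z).

Lemma gauss_mass_pos : 0 < gauss_mass.
Proof.
  apply Rmult_lt_0_compat; [apply Rinv_0_lt_compat, sqrt_2PI_pos | apply I0_pos].
Qed.

Section GaussianSmoothing.

Variables (h : R -> R) (B s : R).
Hypothesis s_pos : 0 < s.
Hypothesis h_continuous : forall x, continuous h x.
Hypothesis h_bounded : forall x, Rabs (h x) <= B.

Lemma is_int_R_gsmooth m :
  is_int_R (fun z => gauss s m z * h z) (/ sqrt (2 * PI) * phi_int (fun u => h (s * u + m))).
Proof.
  assert (HJ : is_int_R (fun u => phi u * h (s * u + m)) (phi_int (fun u => h (s * u + m)))).
  { apply (is_int_R_phi_int _ B);
      [intro; apply continuous_comp_affine; auto | intro; apply h_bounded]. }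
  assert (Cphih : forall x, continuous (fun u => phi u * h (s * u + m)) x).
  { intro. apply continuous_Rmult; [apply continuous_phi | apply continuous_comp_affine; auto]. }
  (* substitute u = (z - m) / s *)
  pose proof (is_RInt_gen_scal _ (/ sqrt (2 * PI)) _
    (is_int_R_comp_affine _ (/ s) (- m / s) _ (Rinv_0_lt_compat _ s_pos) Cphih HJ)) as H.
  refine (is_int_R_ext _ _ _ _ H). intro z.
  change (/ sqrt (2 * PI) * (/ s * (phi (/ s * z + - m / s) * h (s * (/ s * z + - m / s) + m)))
          = gauss s m z * h z).
  replace (s * (/ s * z + - m / s) + m) with z by (field; lra).
  unfold gauss, phi.
  replace (- (/ s * z + - m / s) ^ 2 / 2) with (- (z - m) ^ 2 / (2 * s ^ 2)) by (field; lra).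
  rewrite Rinv_mult. ring.
Qed.

Lemma gsmooth_eq_phi_int m : gsmooth s m h = / sqrt (2 * PI) * phi_int (fun u => h (s * u + m)).
Proof. apply is_int_R_unique, is_int_R_gsmooth. Qed.

Lemma gsmooth_bounds m a b : (forall x, a <= h x <= b) ->
  gauss_mass * a <= gsmooth s m h <= gauss_mass * b.
Proof.
  intros Hab. rewrite gsmooth_eq_phi_int.
  destruct (phi_int_bounds (fun u => h (s * u + m)) a b) as [Ja Jb];
    [intro; apply continuous_comp_affine; auto | intro; apply Hab |].
  pose proof (Rinv_0_lt_compat _ sqrt_2PI_pos).
  unfold gauss_mass. split; nra.
Qed.

Lemma gsmooth_taylor y d M :
  (forall t, Rabs (h (y + t) - h y - d * t) <= M * t ^ 2) ->
  Rabs (gsmooth s y h - gauss_mass * h y) <= / sqrt (2 * PI) * M * I2 * s ^ 2.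
Proof.
  intros Ht. rewrite gsmooth_eq_phi_int. unfold gauss_mass.
  pose proof (phi_int_taylor h B d M s y h_continuous h_bounded Ht).
  pose proof (Rinv_0_lt_compat _ sqrt_2PI_pos).
  replace (/ sqrt (2 * PI) * phi_int (fun u => h (s * u + y)) - / sqrt (2 * PI) * I0 * h y)
    with (/ sqrt (2 * PI) * (phi_int (fun u => h (s * u + y)) - h y * I0)) by ring.
  rewrite Rabs_mult, Rabs_pos_eq by lra.
  replace (/ sqrt (2 * PI) * M * I2 * s ^ 2) with (/ sqrt (2 * PI) * (M * s ^ 2 * I2)) by ring.
  apply Rmult_le_compat_l; lra.
Qed.

Lemma gsmooth_lipschitz D :
  (forall a b, Rabs (h b - h a) <= D * Rabs (b - a)) ->
  forall y y', Rabs (gsmooth s y' h - gsmooth s y h) <= gauss_mass * D * Rabs (y' - y).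
Proof.
  intros Hlip y y'. rewrite !gsmooth_eq_phi_int. unfold gauss_mass.
  pose proof (Rinv_0_lt_compat _ sqrt_2PI_pos).
  pose proof (phi_int_dist (fun u => h (s * u + y')) (fun u => h (s * u + y)) B (D * Rabs (y' - y))
    ltac:(intro; apply continuous_comp_affine; auto)
    ltac:(intro; apply continuous_comp_affine; auto)
    ltac:(intro; apply h_bounded) ltac:(intro; apply h_bounded)) as Hd.
  rewrite <- Rmult_minus_distr_l, Rabs_mult, Rabs_pos_eq by lra.
  replace (/ sqrt (2 * PI) * I0 * D * Rabs (y' - y))
    with (/ sqrt (2 * PI) * (D * Rabs (y' - y) * I0)) by ring.
  apply Rmult_le_compat_l; [lra|]. apply Hd.
  intro u. replace (y' - y) with (s * u + y' - (s * u + y)) by ring. apply Hlip.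
Qed.

Lemma continuous_gsmooth D :
  (forall a b, Rabs (h b - h a) <= D * Rabs (b - a)) ->
  forall y, continuous (fun m => gsmooth s m h) y.
Proof.
  intros Hlip y. apply filterlim_locally. intros [e He].
  pose proof gauss_mass_pos. set (c := gauss_mass * Rabs D + 1).
  assert (Hc : 0 < c) by (unfold c; pose proof (Rabs_pos D); nra).
  exists (mkposreal (e / c) (Rdiv_lt_0_compat _ _ He Hc)). intros y' Hy'.
  change (Rabs (y' - y) < e / c) in Hy'. change (Rabs (gsmooth s y' h - gsmooth s y h) < e).
  eapply Rle_lt_trans; [apply (gsmooth_lipschitz D Hlip)|].
  apply (Rle_lt_trans _ (c * Rabs (y' - y))).
  - apply Rmult_le_compat_r; [apply Rabs_pos|]. unfold c.
    pose proof (Rle_abs D). nra.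
  - apply (Rmult_lt_compat_l c) in Hy'; auto.
    replace (c * (e / c)) with e in Hy' by (field; lra). exact Hy'.
Qed.

End GaussianSmoothing.

Lemma gauss_mul_gauss s x y z : 0 < s ->
  gauss s z x * gauss s y z
  = gauss (sqrt 2 * s) y x * gauss (s / sqrt 2) ((x + y) / 2) z.
Proof.
  intros Hs.
  pose proof sqrt_2PI_pos.
  assert (H2 : 0 < sqrt 2) by (apply sqrt_lt_R0; lra).
  assert (E1 : (sqrt 2 * s) ^ 2 = 2 * s ^ 2) by (rewrite Rpow_mult_distr, pow2_sqrt; lra).
  assert (E2 : (s / sqrt 2) ^ 2 = s ^ 2 / 2).
  { unfold Rdiv. rewrite Rpow_mult_distr, pow_inv, pow2_sqrt; lra. }
  unfold gauss. rewrite E1, E2.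
  transitivity (/ (s * sqrt (2 * PI)) * / (s * sqrt (2 * PI)) *
    exp (- (x - z) ^ 2 / (2 * s ^ 2) + - (z - y) ^ 2 / (2 * s ^ 2))).
  { rewrite exp_plus. ring. }
  transitivity (/ (sqrt 2 * s * sqrt (2 * PI)) * / (s / sqrt 2 * sqrt (2 * PI)) *
    exp (- (x - y) ^ 2 / (2 * (2 * s ^ 2)) + - (z - (x + y) / 2) ^ 2 / (2 * (s ^ 2 / 2)))).
  2: { rewrite exp_plus. ring. }
  f_equal; [field; lra | f_equal; field; lra].
Qed.

Lemma div_close_inv k lo z wz d : 0 < k -> 0 < lo -> lo <= z ->
  Rabs (z - k * wz) <= d -> Rabs (wz / z - / k) <= d / (k * lo).
Proof.
  intros Hk Hlo Hz Hd.
  replace (wz / z - / k) with (- (z - k * wz) * / (k * z)) by (field; lra).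
  rewrite Rabs_mult, Rabs_Ropp, (Rabs_pos_eq (/ (k * z))) by (left; apply Rinv_0_lt_compat; nra).
  apply Rmult_le_compat; auto; [apply Rabs_pos | left; apply Rinv_0_lt_compat; nra |].
  apply Rinv_le_contravar; nra.
Qed.

Lemma ratio_mul_close p q a lo hi d1 d2 : 0 < lo -> lo <= p -> 0 <= q <= hi ->
  Rabs (q - p) <= d1 -> Rabs (a - 1) <= d2 -> Rabs (q / p * a - 1) <= hi / lo * d2 + d1 / lo.
Proof.
  intros Hlo Hp Hq Hd1 Hd2.
  assert (Hratio : Rabs (q / p) <= hi / lo).
  { rewrite Rabs_pos_eq by (apply Rmult_le_pos; [lra | left; apply Rinv_0_lt_compat; lra]).
    apply (Rle_trans _ (hi / p)); [apply Rmult_le_compat_r; [left; apply Rinv_0_lt_compat|]; lra|].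
    apply Rmult_le_compat_l; [lra | apply Rinv_le_contravar; lra]. }
  assert (Hratio1 : Rabs (q / p - 1) <= d1 / lo).
  { replace (q / p - 1) with ((q - p) * / p) by (field; lra).
    rewrite Rabs_mult, (Rabs_pos_eq (/ p)) by (left; apply Rinv_0_lt_compat; lra).
    apply Rmult_le_compat; auto; [apply Rabs_pos | left; apply Rinv_0_lt_compat; lra |].
    apply Rinv_le_contravar; lra. }
  replace (q / p * a - 1) with (q / p * (a - 1) + (q / p - 1)) by ring.
  eapply Rle_trans; [apply Rabs_triang|]. rewrite Rabs_mult.
  apply Rplus_le_compat; auto. apply Rmult_le_compat; auto using Rabs_pos.
Qed.

Section Weighting.

Variables (w : R -> R) (L U M : R).
Hypothesis w_continuous : forall x, continuous w x.
Hypothesis L_pos : 0 < L.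
Hypothesis w_bounds : forall x, L <= w x <= U.
Hypothesis w_derivable : forall x, ex_derive w x.
Hypothesis Dw_derivable : forall x, ex_derive (Derive w) x.
Hypothesis DDw_bounded : forall x, Rabs (Derive (Derive w) x) <= M.

Lemma w_abs_le x : Rabs (w x) <= U.
Proof. pose proof (w_bounds x). rewrite Rabs_pos_eq; lra. Qed.

Lemma w_lipschitz a b : Rabs (w b - w a) <= (U - L + M) * Rabs (b - a).
Proof.
  apply (lipschitz_of_derive_bound w (Derive w)).
  - intro; apply Derive_correct, w_derivable.
  - apply Derive_bounded_of_bounded; auto.
Qed.

Lemma normaliser_bounds s y : 0 < s -> gauss_mass * L <= gsmooth s y w <= gauss_mass * U.
Proof. intros Hs. apply (gsmooth_bounds w U); auto using w_abs_le. Qed.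

Lemma normaliser_taylor s y : 0 < s ->
  Rabs (gsmooth s y w - gauss_mass * w y) <= / sqrt (2 * PI) * M * I2 * s ^ 2.
Proof.
  intros Hs. apply (gsmooth_taylor w U s Hs w_continuous w_abs_le y (Derive w y) M).
  intro t.
  pose proof (taylor1_remainder_le w M w_derivable Dw_derivable DDw_bounded y (y + t)) as Ht.
  replace (y + t - y) with t in Ht by ring. exact Ht.
Qed.

Definition nweight (s z : R) : R := w z / gsmooth s z w.

Definition robust_factor (s x y : R) : R :=
  gsmooth (sqrt 2 * s) y w / gsmooth s y w * gsmooth (s / sqrt 2) ((x + y) / 2) (nweight s).

Lemma continuous_nweight s z : 0 < s -> continuous (nweight s) z.
Proof.
  intros Hs. apply continuous_Rmult; auto.
  apply continuous_Rinv_comp.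
  - apply (continuous_gsmooth w U s Hs w_continuous w_abs_le (U - L + M) w_lipschitz).
  - pose proof (normaliser_bounds s z Hs). pose proof gauss_mass_pos. nra.
Qed.

Lemma nweight_abs_le s z : 0 < s -> Rabs (nweight s z) <= U / (gauss_mass * L).
Proof.
  intros Hs. unfold nweight. pose proof (normaliser_bounds s z Hs). pose proof (w_bounds z).
  pose proof gauss_mass_pos. assert (0 < gauss_mass * L) by nra.
  rewrite Rabs_pos_eq by (apply Rmult_le_pos; [lra | left; apply Rinv_0_lt_compat; lra]).
  apply Rmult_le_compat; [lra | left; apply Rinv_0_lt_compat; lra | lra |].
  apply Rinv_le_contravar; lra.
Qed.

Lemma gsmooth_nweight_close s s' m : 0 < s -> 0 < s' ->
  Rabs (gsmooth s' m (nweight s) - 1) <= / sqrt (2 * PI) * M * I2 * s ^ 2 / (gauss_mass * L).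
Proof.
  intros Hs Hs'. pose proof gauss_mass_pos as HK. pose proof sqrt_2PI_pos.
  set (eta := / sqrt (2 * PI) * M * I2 * s ^ 2 / (gauss_mass * (gauss_mass * L))).
  assert (Hclose : forall z, / gauss_mass - eta <= nweight s z <= / gauss_mass + eta).
  { intro z. apply Rabs_le_between'.
    apply (div_close_inv gauss_mass (gauss_mass * L)); [auto | nra | apply normaliser_bounds, Hs |].
    apply normaliser_taylor, Hs. }
  destruct (gsmooth_bounds (nweight s) (U / (gauss_mass * L)) s' Hs'
    (fun z => continuous_nweight s z Hs) (fun z => nweight_abs_le s z Hs) m _ _ Hclose).
  replace (/ sqrt (2 * PI) * M * I2 * s ^ 2 / (gauss_mass * L)) with (gauss_mass * eta)
    by (unfold eta; field; repeat split; lra).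
  apply Rabs_le.
  replace (gauss_mass * (/ gauss_mass - eta)) with (1 - gauss_mass * eta) in * by (field; lra).
  replace (gauss_mass * (/ gauss_mass + eta)) with (1 + gauss_mass * eta) in * by (field; lra). lra.
Qed.

Lemma p2_eq_p1_mul_robust_factor s x y : 0 < s ->
  p2 w s x y = p1 w (sqrt 2 * s) x y * robust_factor s x y.
Proof.
  intros Hs.
  assert (Hs' : 0 < s / sqrt 2) by (apply Rdiv_lt_0_compat; [|apply sqrt_lt_R0]; lra).
  assert (Hs2 : 0 < sqrt 2 * s) by (apply Rmult_lt_0_compat; [apply sqrt_lt_R0|]; lra).
  pose proof gauss_mass_pos.
  pose proof (normaliser_bounds s y Hs). pose proof (normaliser_bounds _ y Hs2).
  set (m := (x + y) / 2).
  set (c := w x / gsmooth s y w * gauss (sqrt 2 * s) y x).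
  assert (Hp2 : p2 w s x y = c * gsmooth (s / sqrt 2) m (nweight s)).
  { apply is_int_R_unique.
    pose proof (is_int_R_gsmooth (nweight s) _ _ Hs' (fun z => continuous_nweight s z Hs)
      (fun z => nweight_abs_le s z Hs) m) as HA.
    rewrite <- (gsmooth_eq_phi_int _ (U / (gauss_mass * L))) in HA
      by auto using continuous_nweight, nweight_abs_le.
    refine (is_int_R_ext _ _ _ _ (is_RInt_gen_scal _ c _ HA)). intro z.
    change (c * (gauss (s / sqrt 2) m z * nweight s z) = p1 w s x z * p1 w s z y).
    pose proof (normaliser_bounds s z Hs).
    unfold p1. fold (gsmooth s z w) (gsmooth s y w).
    transitivity (w x / gsmooth s y w * (w z / gsmooth s z w) * (gauss s z x * gauss s y z)).
    - rewrite gauss_mul_gauss by exact Hs. unfold c, nweight, m. field. repeat split; nra.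
    - field. repeat split; nra. }
  rewrite Hp2. unfold p1, robust_factor. fold (gsmooth (sqrt 2 * s) y w). fold m.
  unfold c. field. nra.
Qed.

Lemma robust_factor_close s x y : 0 < s ->
  Rabs (robust_factor s x y - 1)
  <= (U / L + 3) * (/ sqrt (2 * PI) * M * I2) / (gauss_mass * L) * s ^ 2.
Proof.
  intros Hs. pose proof gauss_mass_pos.
  assert (Hs2 : 0 < sqrt 2 * s) by (apply Rmult_lt_0_compat; [apply sqrt_lt_R0|]; lra).
  assert (Hs' : 0 < s / sqrt 2) by (apply Rdiv_lt_0_compat; [|apply sqrt_lt_R0]; lra).
  set (E := / sqrt (2 * PI) * M * I2).
  assert (Hdiff : Rabs (gsmooth (sqrt 2 * s) y w - gsmooth s y w) <= 3 * E * s ^ 2).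
  { pose proof (normaliser_taylor s y Hs).
    pose proof (normaliser_taylor _ y Hs2) as Hs2_taylor.
    rewrite Rpow_mult_distr, pow2_sqrt in Hs2_taylor by lra.
    replace (gsmooth (sqrt 2 * s) y w - gsmooth s y w)
      with ((gsmooth (sqrt 2 * s) y w - gauss_mass * w y) - (gsmooth s y w - gauss_mass * w y))
      by ring.
    eapply Rle_trans; [apply Rabs_triang|]. rewrite Rabs_Ropp. unfold E in *. lra. }
  pose proof (normaliser_bounds s y Hs). pose proof (normaliser_bounds _ y Hs2).
  assert (HKL : 0 < gauss_mass * L) by nra.
  eapply Rle_trans.
  - eapply (ratio_mul_close _ _ _ (gauss_mass * L) (gauss_mass * U) _ _ HKL);
      [lra | lra | exact Hdiff |].
    apply (gsmooth_nweight_close s _ _ Hs Hs').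
  - right. unfold E. pose proof sqrt_2PI_pos. field. repeat split; lra.
Qed.

End Weighting.

Theorem theorem3 (omega : R) (w : R -> R) (L U : R) :
  0 < omega ->
  (forall x, continuous w x) ->
  0 < L ->
  (forall x, L <= w x <= U) ->
  (forall x, ex_derive w x) ->
  (forall x, ex_derive (Derive w) x) ->
  (exists M, forall x, Rabs (Derive (Derive w) x) <= M) ->
  exists (v : R -> R -> R -> R) (C : R),
    0 < C /\
    forall x y tau, 0 < tau ->
      p2 w (omega * sqrt tau) x y
        = p1 w (sqrt 2 * (omega * sqrt tau)) x y * v x y tau
      /\ Rabs (v x y tau - 1) <= C * tau.
Proof.
  intros omega_pos Cw L_pos Hw Dw DDw [M HM].
  set (C0 := (U / L + 3) * (/ sqrt (2 * PI) * M * I2) / (gauss_mass * L)).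
  exists (fun x y tau => robust_factor w (omega * sqrt tau) x y), (Rabs (C0 * omega ^ 2) + 1).
  split; [pose proof (Rabs_pos (C0 * omega ^ 2)); lra|].
  intros x y tau Htau.
  assert (Hs : 0 < omega * sqrt tau) by (apply Rmult_lt_0_compat; [|apply sqrt_lt_R0]; lra).
  split; [apply (p2_eq_p1_mul_robust_factor w L U M); auto|].
  eapply Rle_trans; [apply (robust_factor_close w L U M); auto|].
  fold C0. rewrite Rpow_mult_distr, pow2_sqrt by lra.
  rewrite <- Rmult_assoc. apply Rmult_le_compat_r; [lra|].
  pose proof (Rle_abs (C0 * omega ^ 2)). lra.
Qed.
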